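(* Let $Y$ be a simplicial complex with the property that each $1$-simplex is contained in a $2$-simplex. Then the natural chain map $L_\bullet(Y)\to\Delta_\bullet(Y)$ induces an isomorphism $H_1(L_\bullet(Y))\cong H_1(\Delta_\bullet(Y))$.
   Context: For a simplicial complex $Y$: $L_n(Y)$ is the free abelian group on ordered $(n+1)$-tuples $(y_0,\ldots,y_n)$ of pairwise distinct vertices such that $\{y_0,\ldots,y_n\}$ is an $n$-simplex of $Y$; $\Delta_n(Y)$ (the ordered chain complex) is the free abelian group on ordered $(n+1)$-tuples $(y_0,\ldots,y_n)$ of vertices (repetitions allowed) such that $\{y_0,\ldots,y_n\}$ is a simplex of $Y$. Both carry the differential $d(y_0,\ldots,y_n)=\sum_{i=0}^n(-1)^i(y_0,\ldots,\widehat{y_i},\ldots,y_n)$, and the chain map $L_\bullet(Y)\to\Delta_\bullet(Y)$ is the inclusion on basis elements. *)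

From HB Require Import structures.
From mathcomp Require Import all_boot all_order all_algebra.
From mathcomp Require Import finmap.
From mathcomp Require Import freeg.

Set Implicit Arguments.
Unset Strict Implicit.
Unset Printing Implicit Defensive.

Import Order.TTheory GRing.Theory Num.Theory.
Local Open Scope ring_scope.
Local Open Scope fset_scope.

Record simplicial_complex (V : choiceType) := SimplicialComplex {
  simplex : {fset V} -> Prop;
  simplex_neq0 : forall s, simplex s -> s != fset0;
  simplex_sub : forall s s', simplex s -> s' `<=` s -> s' != fset0 -> simplex s'
}.

Definition is_nsimplex (V : choiceType) (Y : simplicial_complex V) (n : nat)
  (s : {fset V}) : Prop := simplex Y s /\ #|` s| = n.+1.

Definition L_basis (V : choiceType) (Y : simplicial_complex V) (n : nat)
  (t : seq V) : Prop :=
  size t = n.+1 /\ uniq t /\ is_nsimplex Y n [fset x | x in t].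

Definition Delta_basis (V : choiceType) (Y : simplicial_complex V) (n : nat)
  (t : seq V) : Prop :=
  size t = n.+1 /\ simplex Y [fset x | x in t].

(* Both L_n(Y) and Delta_n(Y) are realised inside the free abelian group on
   all finite sequences of vertices, as the subgroups of chains supported on
   the respective bases.  The chain map L -> Delta is then the inclusion. *)
Definition chain (V : choiceType) := {freeg (seq V) / int}.

Definition supported_on (V : choiceType) (B : seq V -> Prop) (c : chain V) :=
  forall t, coeff t c != 0 -> B t.

Definition Lchain (V : choiceType) (Y : simplicial_complex V) n (c : chain V) :=
  supported_on (L_basis Y n) c.
Definition Dchain (V : choiceType) (Y : simplicial_complex V) n (c : chain V) :=
  supported_on (Delta_basis Y n) c.

Definition face (V : choiceType) (i : nat) (t : seq V) : seq V :=
  take i t ++ drop i.+1 t.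

Definition bd_basis (V : choiceType) (t : seq V) : chain V :=
  \sum_(i < size t) << ((-1) ^+ i : int) *g face i t >>.

Definition bd (V : choiceType) (c : chain V) : chain V :=
  fglift (@bd_basis V) c.

Definition Lcycle1 (V : choiceType) (Y : simplicial_complex V) (z : chain V) :=
  Lchain Y 1 z /\ bd z = 0.
Definition Dcycle1 (V : choiceType) (Y : simplicial_complex V) (z : chain V) :=
  Dchain Y 1 z /\ bd z = 0.
Definition Lbound1 (V : choiceType) (Y : simplicial_complex V) (z : chain V) :=
  exists b, Lchain Y 2 b /\ z = bd b.
Definition Dbound1 (V : choiceType) (Y : simplicial_complex V) (z : chain V) :=
  exists b, Dchain Y 2 b /\ z = bd b.

(* The map H_1(L(Y)) -> H_1(Delta(Y)), [z] |-> [z], induced by the inclusion,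
   is injective and surjective (hence a group isomorphism, being additive).
   H_1 = Z_1 / B_1, and this unfolds bijectivity of the induced map. *)
Definition H1_incl_injective (V : choiceType) (Y : simplicial_complex V) :=
  forall z, Lcycle1 Y z -> Dbound1 Y z -> Lbound1 Y z.
Definition H1_incl_surjective (V : choiceType) (Y : simplicial_complex V) :=
  forall z, Dcycle1 Y z -> exists w, Lcycle1 Y w /\ Dbound1 Y (z - w).
Definition H1_incl_iso (V : choiceType) (Y : simplicial_complex V) :=
  H1_incl_injective Y /\ H1_incl_surjective Y.

(* Deleting the tuples with a repeated vertex, [nondeg], retracts Delta onto L
   and commutes with the boundary on 1-chains, because d(x,x) = 0.
   Surjectivity: a Delta 1-cycle z differs from the L-cycle nondeg z by a sum
   of degenerate edges (x,x) = d(x,x,x).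
   Injectivity: if an L-cycle z equals d b with b a Delta 2-chain, then
   z = nondeg (d b), and nondeg (d t) is an L-boundary for each basis tuple t:
   it is 0 or d t, except for t = (a,b,a) where it is (a,b) + (b,a).  Here the
   hypothesis is used: completing the edge {a,b} to a 2-simplex {a,b,c} gives
   (a,b) + (b,a) = d((a,b,c) + (b,a,c)). *)

From HB Require Import structures.
From mathcomp Require Import all_boot all_order all_algebra finmap freeg.

Set Implicit Arguments.
Unset Strict Implicit.
Unset Printing Implicit Defensive.

Import GRing.Theory.
Local Open Scope fset_scope.
Local Open Scope ring_scope.

Lemma scalezE (M : lmodType int) (k : int) (v : M) : k *: v = v *~ k.
Proof. by rewrite -[k in LHS]intz scaler_int. Qed.

Section FreegLift.
Variables (K : choiceType) (M : lmodType int).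
Implicit Types (f g : K -> M) (D : {freeg K / int}).

HB.instance Definition _ f :=
  GRing.isZmodMorphism.Build {freeg K / int} M (fglift f) (lift_is_additive f).

Lemma fgliftU1 f x : fglift f << x >> = f x.
Proof. by rewrite liftU scale1r. Qed.

Lemma fgliftE f D : fglift f D = \sum_(x <- dom D) f x *~ coeff x D.
Proof.
rewrite -{1}[D]freeg_sumE raddf_sum; apply: eq_bigr => x _.
by rewrite -scalezE; exact: liftU.
Qed.

Lemma eq_in_fglift f g D : {in dom D, f =1 g} -> fglift f D = fglift g D.
Proof. by move=> fg; rewrite !fgliftE !big_seq; apply: eq_bigr => x /fg ->. Qed.

Lemma fgliftB f g D : fglift (f \- g) D = fglift f D - fglift g D.
Proof. by rewrite !fgliftE -sumrB; apply: eq_bigr => x _; rewrite mulrzBl. Qed.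

Lemma fglift_ind (P : M -> Prop) f D :
  P 0 -> (forall u v, P u -> P v -> P (u + v)) ->
  (forall u k, P u -> P (u *~ k)) ->
  (forall x, x \in dom D -> P (f x)) -> P (fglift f D).
Proof.
move=> P0 PD PMz Pf; rewrite fgliftE big_seq.
by apply: big_ind => // x /Pf; apply: PMz.
Qed.

End FreegLift.

Lemma fglift_comp (K1 K2 : choiceType) (M : lmodType int)
    (f : K1 -> {freeg K2 / int}) (g : K2 -> M) (D : {freeg K1 / int}) :
  fglift g (fglift f D) = fglift (fun x => fglift g (f x)) D.
Proof.
rewrite [fglift f D]fgliftE [RHS]fgliftE raddf_sum.
by apply: eq_bigr => x _; rewrite raddfMz.
Qed.

Lemma fglift_id (K : choiceType) (D : {freeg K / int}) :
  fglift (fun x => << x >>) D = D.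
Proof.
rewrite fgliftE -[RHS]freeg_sumE; apply: eq_bigr => x _.
by rewrite freeg_mulz intz.
Qed.

Section Chains.
Variable V : choiceType.
Implicit Types (B : seq V -> Prop) (c : chain V) (s t : seq V).

Lemma supported_on0 B : supported_on B 0.
Proof. by move=> t; rewrite coeff0 eqxx. Qed.

Lemma supported_onD B c c' :
  supported_on B c -> supported_on B c' -> supported_on B (c + c').
Proof.
move=> Bc Bc' t; rewrite coeffD.
by case: (eqVneq (coeff t c) 0) => [->|/Bc //]; rewrite add0r => /Bc'.
Qed.

Lemma supported_onMz B c k : supported_on B c -> supported_on B (c *~ k).
Proof.
move=> Bc t; rewrite raddfMz /=.
by case: (eqVneq (coeff t c) 0) => [->|/Bc //]; rewrite mul0rz eqxx.
Qed.

Lemma supported_onU B t : B t -> supported_on B << t >>.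
Proof.
move=> Bt s; rewrite coeffU mul1r.
by case: (eqVneq t s) => [<- //|]; rewrite eqxx.
Qed.

Lemma supported_on_fglift B f c :
  (forall s, s \in dom c -> supported_on B (f s)) ->
  supported_on B (fglift f c).
Proof.
apply: fglift_ind; [exact: supported_on0 | exact: supported_onD |].
by move=> u k; apply: supported_onMz.
Qed.

Lemma bdU t : bd << t >> = bd_basis t.
Proof. exact: fgliftU1. Qed.

Lemma bd_basis_pair (a b : V) : bd_basis [:: a; b] = << [:: b] >> - << [:: a] >>.
Proof. by rewrite /bd_basis /= !big_ord_recl big_ord0 /face /= addr0 freegUN. Qed.

Lemma bd_basis_triple (a b c : V) :
  bd_basis [:: a; b; c] = << [:: b; c] >> - << [:: a; c] >> + << [:: a; b] >>.
Proof.
rewrite /bd_basis /= !big_ord_recl big_ord0 /face /= addr0.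
by rewrite freegUN sqrrN expr1n addrA.
Qed.

Definition bd_on B (z : chain V) := exists b, supported_on B b /\ z = bd b.

Lemma bd_on0 B : bd_on B 0.
Proof. by exists 0; split; [exact: supported_on0 | rewrite /bd raddf0]. Qed.

Lemma bd_onU B t : B t -> bd_on B (bd_basis t).
Proof. by exists << t >>; split; [exact: supported_onU | rewrite bdU]. Qed.

Lemma bd_on_fglift B f c :
  (forall s, s \in dom c -> bd_on B (f s)) -> bd_on B (fglift f c).
Proof.
apply: fglift_ind; first exact: bd_on0.
- move=> _ _ [b [Bb ->]] [b' [Bb' ->]].
  by exists (b + b'); split; [exact: supported_onD | rewrite /bd raddfD].
- move=> _ k [b [Bb ->]].
  by exists (b *~ k); split; [exact: supported_onMz | rewrite /bd raddfMz].
Qed.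

Definition nondeg_basis s : chain V := if uniq s then << s >> else 0.

Definition nondeg c : chain V := fglift nondeg_basis c.

Lemma nondeg_basis_pair (x y : V) :
  nondeg_basis [:: x; y] = if x == y then 0 else << [:: x; y] >>.
Proof. by rewrite /nondeg_basis /= inE andbT; case: eqP. Qed.

Variable Y : simplicial_complex V.

Lemma simplex_of_subset (s : {fset V}) t :
  simplex Y s -> t != [::] -> {subset t <= s} -> simplex Y [fset x | x in t].
Proof.
case: t => [//|x t] Ys _ ts; apply: (simplex_sub Ys).
  by apply/fsubsetP => y; rewrite in_fset => /ts.
by apply/fset0Pn; exists x; rewrite in_fset mem_head.
Qed.

Lemma L_basis_of_Delta n t : Delta_basis Y n t -> uniq t -> L_basis Y n t.
Proof.
move=> [tn Yt] ut; do !split => //.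
by rewrite card_fseq undup_id // tn.
Qed.

Lemma L_basis_of_subset n (s : {fset V}) t :
  simplex Y s -> size t = n.+1 -> uniq t -> {subset t <= s} -> L_basis Y n t.
Proof.
move=> Ys tn ut ts; apply: L_basis_of_Delta => //; split => //.
by apply: simplex_of_subset Ys _ ts; rewrite -size_eq0 tn.
Qed.

Lemma nondeg_Lchain n c : Lchain Y n c -> nondeg c = c.
Proof.
move=> Lc; rewrite -[RHS]fglift_id; apply: eq_in_fglift => s.
by rewrite mem_dom => /Lc [_ [us _]]; rewrite /nondeg_basis us.
Qed.

Lemma Lchain_nondeg n c : Dchain Y n c -> Lchain Y n (nondeg c).
Proof.
move=> Dc; apply: supported_on_fglift => s; rewrite mem_dom => /Dc Ds.
rewrite /nondeg_basis; case: ifP => us; last exact: supported_on0.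
by apply: supported_onU; apply: L_basis_of_Delta.
Qed.

Lemma bd_nondeg1 c : Dchain Y 1 c -> bd (nondeg c) = bd c.
Proof.
move=> Dc; rewrite /bd /nondeg fglift_comp; apply: eq_in_fglift => s.
rewrite mem_dom => /Dc [].
case: s => [|x [|y [|? ?]]] //= _ _; rewrite nondeg_basis_pair.
case: eqVneq => [<-|_]; last exact: fgliftU1.
by rewrite raddf0 bd_basis_pair subrr.
Qed.

Lemma Dbound1_sub_nondeg c : Dchain Y 1 c -> Dbound1 Y (c - nondeg c).
Proof.
move=> Dc; rewrite -{1}(fglift_id c) /nondeg -fgliftB.
apply: bd_on_fglift => s; rewrite mem_dom => /Dc [].
case: s => [|x [|y [|? ?]]] //= _ Yxy; rewrite nondeg_basis_pair.
case: eqVneq => [<-|_]; last by rewrite subrr; exact: bd_on0.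
rewrite subr0; exists << [:: x; x; x] >>.
split; last by rewrite bdU bd_basis_triple subrr add0r.
apply: supported_onU; split=> //; apply: simplex_of_subset Yxy _ _ => // z.
by rewrite in_fset !inE !orbb => ->.
Qed.

End Chains.

Section EdgesInTriangles.
Variables (V : choiceType) (Y : simplicial_complex V).
Hypothesis edge_in_triangle : forall s, is_nsimplex Y 1 s ->
  exists s', is_nsimplex Y 2 s' /\ s `<=` s'.

Lemma Lbound1_flip (s : {fset V}) (a b : V) :
  simplex Y s -> a \in s -> b \in s -> a != b ->
  Lbound1 Y (<< [:: a; b] >> + << [:: b; a] >>).
Proof.
move=> Ys sa sb ab.
have abs : [fset a; b] `<=` s by rewrite fsubUset !fsub1set sa sb.
have Yab : is_nsimplex Y 1 [fset a; b].
  split; last by rewrite cardfs2 ab.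
  by apply: (simplex_sub Ys abs); apply/fset0Pn; exists a; rewrite !inE eqxx.
have [t [[Yt t3] abt]] := edge_in_triangle Yab.
have [c ct] : exists2 c, c \in t & c \notin [fset a; b].
  apply/fsubsetPn; apply/negP => /fsubset_leq_card.
  by rewrite t3 cardfs2 ab.
rewrite !inE negb_or => /andP[ca cb].
have [ac bc ba] : [/\ a != c, b != c & b != a] by split; rewrite eq_sym.
have [ta tb] : a \in t /\ b \in t.
  by move: abt; rewrite fsubUset !fsub1set => /andP[].
have L_triangle (x y : V) : x \in t -> y \in t -> uniq [:: x; y; c] -> L_basis Y 2 [:: x; y; c].
  move=> tx ty u; apply: L_basis_of_subset Yt _ u _ => // z.
  by rewrite !inE => /or3P[] /eqP ->.
exists (<< [:: a; b; c] >> + << [:: b; a; c] >>); split.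
  by apply: supported_onD; apply: supported_onU; apply: L_triangle;
    rewrite //= !inE !negb_or ?ab ?ac ?bc ?ba.
by rewrite /bd raddfD /= !fgliftU1 !bd_basis_triple addrACA -opprB addNr add0r.
Qed.

Lemma Lbound1_nondeg_bd_basis t :
  Delta_basis Y 2 t -> Lbound1 Y (nondeg (bd_basis t)).
Proof.
case: t => [|a [|b [|c [|? ?]]]] [//= _ Yt].
have tmem x : x \in [:: a; b; c] -> x \in [fset x | x in [:: a; b; c]].
  by rewrite in_fset.
rewrite bd_basis_triple /nondeg raddfD raddfB /= !fgliftU1 !nondeg_basis_pair.
case: (eqVneq a b) => [<-|ab].
  by rewrite subrr add0r; exact: bd_on0.
case: (eqVneq b c) => [<-|bc].
  by rewrite (negbTE ab) sub0r addNr; exact: bd_on0.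
case: (eqVneq a c) => [<-|ac].
  rewrite subr0 addrC.
  by apply: (Lbound1_flip Yt _ _ ab); apply: tmem; rewrite !inE eqxx ?orbT.
rewrite -bd_basis_triple.
apply: bd_onU; apply: L_basis_of_subset Yt _ _ tmem => //=.
by rewrite !inE !negb_or ab ac bc.
Qed.

End EdgesInTriangles.

Theorem lemma7p1 (V : choiceType) (Y : simplicial_complex V)
  (hY : forall s, is_nsimplex Y 1 s ->
        exists s', is_nsimplex Y 2 s' /\ s `<=` s') :
  H1_incl_iso Y.
Proof.
split.
- move=> z [Lz _] [b [Db zE]].
  rewrite -(nondeg_Lchain Lz) zE /nondeg /bd fglift_comp.
  apply: bd_on_fglift => t; rewrite mem_dom => /Db Dt.
  exact: Lbound1_nondeg_bd_basis.
- move=> z [Dz bz]; exists (nondeg z); split; last exact: Dbound1_sub_nondeg.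
  by split; [exact: Lchain_nondeg | rewrite (bd_nondeg1 Dz)].
Qed.
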